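(* Let $\mathcal{R}$ be the involutive system $u_{ij}=f_{ij}(x^1,x^2,x^3,u,u_i,u_j)$, $1\le i<j\le3$, and let $\Theta=\mu\theta$ satisfy on $\mathcal{R}^\infty$ the rescaled universal linearization $X_lX_k(\Theta)+A^l_{lk}X_l(\Theta)+A^k_{lk}X_k(\Theta)+C_{lk}\Theta=0$ for all $1\le l\ne k\le 3$. Fix an ordered pair $(i,j)$, $i\neq j$, and let $\xi_{ij}=X_j(\Theta)+A^i_{ij}\Theta$ be the $(i,j)$ Laplace transform of $\Theta$. If the Laplace invariants $H_{ij}$ and $H_{ijk}$ (for $k\ne i,j$) are nonzero, then $\xi_{ij}$ satisfies a system of the same form, i.e. there are smooth functions $\hat A^l_{lk},\hat A^k_{lk},\hat C_{lk}$ on $\mathcal{R}^\infty$ with $X_lX_k(\xi_{ij})+\hat A^l_{lk}X_l(\xi_{ij})+\hat A^k_{lk}X_k(\xi_{ij})+\hat C_{lk}\xi_{ij}=0$ for all $1\le l\ne k\le3$.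
   Context: Setting: $U\subset\mathbb{R}^3$ open connected, $E=U\times(a,b)\to U$ trivial bundle, $J^\infty(E)$ its jet bundle with contact forms $\theta_I=du_I-\sum_ju_{Ij}dx^j$, $\theta=du-\sum_iu_idx^i$. $\mathcal{R}$: $F_{ij}:=u_{ij}-f_{ij}(x^1,x^2,x^3,u,u_i,u_j)=0$, $1\le i<j\le3$, $f_{ij}$ smooth with $D_kf_{ij}=D_if_{kj}$ for distinct $i,j,k$; $\mathcal{R}^\infty$ its infinite prolongation; $X_i=D_i$ the commuting total derivatives on $\mathcal{R}^\infty$; for a total vector field $X$ and a contact form $\omega$, $X(\omega)$ is the projected Lie derivative, with $X_j(\theta_I)=\theta_{Ij}$. Applying $d_V$ to $F_{ij}=0$ gives $X_iX_j(\theta)+a^i_{ij}X_i(\theta)+a^j_{ij}X_j(\theta)+c_{ij}\theta=0$, $a^i_{ij}=\partial F_{ij}/\partial u_i$, $a^j_{ij}=\partial F_{ij}/\partial u_j$, $c_{ij}=\partial F_{ij}/\partial u$. For a nonvanishing function $\mu$, $\Theta=\mu\theta$ satisfies the system above with $A^i_{ij}=a^i_{ij}-X_j(\mu)/\mu$, $A^j_{ij}=a^j_{ij}-X_i(\mu)/\mu$, $C_{ij}=c_{ij}-X_iX_j(\mu)/\mu-a^i_{ij}X_i(\mu)/\mu-a^j_{ij}X_j(\mu)/\mu+2X_i(\mu)X_j(\mu)/\mu^2$; coefficients are symmetric in the lower indices ($A^i_{ji}=A^i_{ij}$, $C_{ji}=C_{ij}$). Laplace invariants: $H_{ij}=D_i(A^i_{ij})+A^i_{ij}A^j_{ij}-C_{ij}$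 for ordered $i\ne j$, and $H_{ijk}=A^k_{kj}-A^i_{ij}$ for $k\ne i,j$. *)

(* Abstract differential-algebraic model of the infinite
   prolongation R^oo of the system u_ij = f_ij. *)
From HB Require Import structures.
From mathcomp Require Import all_boot all_order all_algebra.
Set Implicit Arguments. Unset Strict Implicit. Unset Printing Implicit Defensive.
Import Order.TTheory GRing.Theory Num.Theory.
Local Open Scope ring_scope.

Section Defs.
Variables (F : comUnitRingType) (M : lmodType F).

(* D i : total derivative D_i acting on functions on R^oo *)
Definition is_derivation (d : F -> F) : Prop :=
  (forall f g, d (f + g) = d f + d g) /\ (forall f g, d (f * g) = d f * g + f * d g).

(* X i : action of the total vector field X_i on contact forms (projected Lie
   derivative), compatible with D i via Leibniz *)
Definition is_form_derivation (d : F -> F) (x : M -> M) : Prop :=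
  (forall v w, x (v + w) = x v + x w) /\ (forall f w, x (f *: w) = d f *: w + f *: x w).

(* the form  X_l X_k(w) + a^l_{lk} X_l(w) + a^k_{lk} X_k(w) + c_{lk} w = 0 for all l<>k;
   coefficient  a p l k  stands for a^p_{lk} *)
Definition satisfies_system (X : 'I_3 -> M -> M)
    (a : 'I_3 -> 'I_3 -> 'I_3 -> F) (c : 'I_3 -> 'I_3 -> F) (w : M) : Prop :=
  forall l k : 'I_3, l != k ->
    X l (X k w) + a l l k *: X l w + a k l k *: X k w + c l k *: w = 0.

Definition symmetric_coefs (a : 'I_3 -> 'I_3 -> 'I_3 -> F) (c : 'I_3 -> 'I_3 -> F) : Prop :=
  (forall p l k, a p l k = a p k l) /\ (forall l k, c l k = c k l).

(* rescaled coefficients for Theta = mu theta: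
   A^i_{ij} = a^i_{ij} - X_j(mu)/mu  (the subtracted derivative is along the other
   lower index) *)
Definition Acoef (D : 'I_3 -> F -> F) (a : 'I_3 -> 'I_3 -> 'I_3 -> F) (mu : F)
    (p i j : 'I_3) : F :=
  a p i j - D (if p == i then j else i) mu / mu.

Definition Ccoef (D : 'I_3 -> F -> F) (a : 'I_3 -> 'I_3 -> 'I_3 -> F)
    (c : 'I_3 -> 'I_3 -> F) (mu : F) (i j : 'I_3) : F :=
  c i j - D i (D j mu) / mu - a i i j * D i mu / mu - a j i j * D j mu / mu
  + 2%:R * D i mu * D j mu / mu ^+ 2.

Definition Hinv (D : 'I_3 -> F -> F) (A : 'I_3 -> 'I_3 -> 'I_3 -> F)
    (C : 'I_3 -> 'I_3 -> F) (i j : 'I_3) : F :=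
  D i (A i i j) + A i i j * A j i j - C i j.

Definition Hinv3 (A : 'I_3 -> 'I_3 -> 'I_3 -> F) (i j k : 'I_3) : F :=
  A k k j - A i i j.

Definition laplace_transform (X : 'I_3 -> M -> M) (A : 'I_3 -> 'I_3 -> 'I_3 -> F)
    (i j : 'I_3) (Theta : M) : M :=
  X j Theta + A i i j *: Theta.

End Defs.

(* The Laplace transform xi = X_j(Theta) + A^i_ij Theta satisfies two first-order
   relations:  X_i xi + A^j_ij xi = H_ij Theta  and
   X_k xi + A^j_jk xi = - H_ijk xi_ik,  where xi_ik is the (i,k) Laplace transform.
   The second one needs the integrability condition for D_k A^i_ij, read off as the
   coefficient of X_i Theta in X_k X_i X_j Theta = X_i X_j X_k Theta; this is legitimate
   because Theta, X_1 Theta, X_2 Theta, X_3 Theta are linearly independent.  When H_ij and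
   H_ijk are invertible, these relations can be solved for Theta and xi_ik, and
   differentiating them once more expresses each X_l X_m xi through xi, X_l xi, X_m xi. *)

From HB Require Import structures.
From mathcomp Require Import all_boot all_order all_algebra.
From mathcomp Require Import ring.
Set Implicit Arguments. Unset Strict Implicit. Unset Printing Implicit Defensive.
Import GRing.Theory.
Local Open Scope ring_scope.

(* Nagata's idealization F x M, in which M squares to zero: a commutative ring into
   which M embeds F-linearly, so that [ring] proves identities in the module M. *)
Definition idealization (F : comUnitRingType) (M : lmodType F) := (F * M)%type.
Arguments idealization {F} M.
HB.instance Definition _ F M := GRing.Zmodule.on (@idealization F M).

Section Idealization.
Variables (F : comUnitRingType) (M : lmodType F).
Implicit Types x y : idealization M.

Definition idl_mul x y : idealization M := (x.1 * y.1, x.1 *: y.2 + y.1 *: x.2).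

Lemma idl_mulA : associative idl_mul.
Proof.
move=> [a v] [b w] [c u]; congr pair; rewrite /= ?mulrA // !scalerDr !scalerA.
by rewrite addrA [c * a]mulrC [c * b]mulrC addrAC.
Qed.
Lemma idl_mulC : commutative idl_mul.
Proof. by move=> [a v] [b w]; rewrite /idl_mul /= mulrC addrC. Qed.
Lemma idl_mul1 : left_id ((1 : F), (0 : M)) idl_mul.
Proof. by move=> [a v]; rewrite /idl_mul /= mul1r scale1r scaler0 addr0. Qed.
Lemma idl_mulDl : left_distributive idl_mul +%R.
Proof.
by move=> [a v] [b w] [c u]; rewrite /idl_mul /= mulrDl scalerDl scalerDr addrACA.
Qed.
End Idealization.

HB.instance Definition _ F M := GRing.Zmodule_isComPzRing.Build (@idealization F M)
  (@idl_mulA F M) (@idl_mulC F M) (@idl_mul1 F M) (@idl_mulDl F M).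

Section Embeddings.
Variables (F : comUnitRingType) (M : lmodType F).

Definition idl_scalar (f : F) : idealization M := (f, 0).
Definition idl_vector (v : M) : idealization M := (0, v).

Lemma idl_scalar_is_zmod_morphism : zmod_morphism idl_scalar.
Proof. by move=> f g; congr pair; rewrite subrr. Qed.
Lemma idl_scalar_is_monoid_morphism : monoid_morphism idl_scalar.
Proof. by split=> // f g; congr pair; rewrite /= !scaler0 addr0. Qed.

Lemma idl_vectorD v w : idl_vector (v + w) = idl_vector v + idl_vector w.
Proof. by congr pair; rewrite /= addr0. Qed.
Lemma idl_vectorN v : idl_vector (- v) = - idl_vector v.
Proof. by congr pair; rewrite /= oppr0. Qed.
Lemma idl_vector0 : idl_vector 0 = 0.
Proof. by []. Qed.
Lemma idl_vectorZ f v : idl_vector (f *: v) = idl_scalar f * idl_vector v.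
Proof.
by change (((0 : F), f *: v) = (f * 0, f *: v + 0 *: 0)); rewrite mulr0 scaler0 addr0.
Qed.
Lemma idl_vector_inj : injective idl_vector.
Proof. by move=> v w []. Qed.
End Embeddings.
Arguments idl_vector {F M}.

HB.instance Definition _ (F : comUnitRingType) (M : lmodType F) :=
  GRing.isZmodMorphism.Build F (idealization M)
  (@idl_scalar F M) (@idl_scalar_is_zmod_morphism F M).
HB.instance Definition _ (F : comUnitRingType) (M : lmodType F) :=
  GRing.isMonoidMorphism.Build F (idealization M)
  (@idl_scalar F M) (@idl_scalar_is_monoid_morphism F M).

Ltac idl_vector_push :=
  apply: idl_vector_inj;
  rewrite ?(idl_vectorD, idl_vectorN, idl_vectorZ, idl_vector0).
Tactic Notation "lmod_ring" := idl_vector_push; ring.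
Tactic Notation "lmod_ring" ":" ne_constr_list(L) := idl_vector_push; ring: L.

Lemma ord3_cover (i j k : 'I_3) : i != j -> i != k -> j != k ->
  forall x, [|| x == i, x == j | x == k].
Proof. by move=> + + + x; move: i j k x; do 4! case=> [[|[|[|?]]] ?]. Qed.

Lemma ord3_third (i j : 'I_3) : i != j -> exists k : 'I_3, (k != i) && (k != j).
Proof.
move: i j => [[|[|[|?]]] ?] [[|[|[|?]]] ?] //= _.
all: by [exists (@Ordinal 3 0 isT) | exists (@Ordinal 3 1 isT) | exists (@Ordinal 3 2 isT)].
Qed.

Lemma big_ord3_distinct (V : zmodType) (f : 'I_3 -> V) (i j k : 'I_3) :
  i != j -> i != k -> j != k -> \sum_(l < 3) f l = f i + f j + f k.
Proof.
move=> hij hik hjk.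
rewrite (bigD1 i) //= (bigD1 j) 1?eq_sym //= (bigD1 k) /=; last by rewrite !(eq_sym k) hik hjk.
rewrite big_pred0 ?addr0 ?addrA // => x.
by have := ord3_cover hij hik hjk x; case: (x == i); case: (x == j); case: (x == k).
Qed.

Section TotalDerivatives.
Variables (F : comUnitRingType) (M : lmodType F).
Variables (D : 'I_3 -> F -> F) (X : 'I_3 -> M -> M).
Hypothesis hX : forall l, is_form_derivation (D l) (X l).
Hypothesis hXcomm : forall l m w, X l (X m w) = X m (X l w).

Lemma XD l v w : X l (v + w) = X l v + X l w. Proof. exact: (hX l).1. Qed.
Lemma XZ l f w : X l (f *: w) = D l f *: w + f *: X l w. Proof. exact: (hX l).2. Qed.
Lemma X0 l : X l 0 = 0.
Proof. by apply: (addrI (X l 0)); rewrite -XD !addr0. Qed.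
Lemma XN l v : X l (- v) = - X l v.
Proof. by apply: (addrI (X l v)); rewrite -XD !subrr X0. Qed.

Definition jet1_free (w : M) : Prop :=
  forall (c0 : F) (cs : 'I_3 -> F),
    c0 *: w + \sum_(l < 3) cs l *: X l w = 0 -> c0 = 0 /\ forall l, cs l = 0.

Definition second_order_rel (l m : 'I_3) (w : M) : Prop :=
  exists p q r : F, X l (X m w) + p *: X l w + q *: X m w + r *: w = 0.

Lemma jet1_free_coefX w (i j k : 'I_3) (c0 ci cj ck : F) :
  jet1_free w -> i != j -> i != k -> j != k ->
  c0 *: w + ci *: X i w + cj *: X j w + ck *: X k w = 0 -> ci = 0.
Proof.
move=> hw hij hik hjk hc.
pose cs l := if l == i then ci else if l == j then cj else ck.
suff /(hw c0 cs) [_ /(_ i)] : c0 *: w + \sum_(l < 3) cs l *: X l w = 0.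
  by rewrite /cs eqxx.
rewrite (big_ord3_distinct _ hij hik hjk) /cs eqxx eq_sym (negbTE hij) eqxx.
by rewrite eq_sym (negbTE hik) eq_sym (negbTE hjk) !addrA.
Qed.

Lemma jet1_free_scale (mu : F) w : mu \is a GRing.unit ->
  jet1_free w -> jet1_free (mu *: w).
Proof.
move=> hmu hw c0 cs hc.
have hc' : (c0 * mu) *: w
    + \sum_(l < 3) ((cs l * D l mu) *: w + (cs l * mu) *: X l w) = 0.
  apply: etrans hc; rewrite scalerA; congr (_ + _).
  by apply: eq_bigr => l _; rewrite XZ scalerDr !scalerA.
rewrite big_split /= addrA -scaler_suml -scalerDl in hc'.
have [hc0 hcs] := hw _ _ hc'.
have cs0 l : cs l = 0 by rewrite -(mulrK hmu (cs l)) hcs mul0r.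
split=> //; apply: (mulIr hmu); move: hc0.
by rewrite mul0r (eq_bigr (fun=> 0)) ?big1 ?addr0 // => l _; rewrite cs0 mul0r.
Qed.

Lemma satisfies_system_scale a c (mu : F) w : mu \is a GRing.unit ->
  satisfies_system X a c w ->
  satisfies_system X (Acoef D a mu) (Ccoef D a c mu) (mu *: w).
Proof.
move=> hmu hw l m hlm.
have hml : (m == l) = false by rewrite eq_sym (negbTE hlm).
rewrite /Acoef /Ccoef eqxx hml -(scaler0 _ mu) -(hw l m hlm) !(XD, XZ) -exprVn.
have hmuV : idl_scalar M mu * idl_scalar M mu^-1 = 1 by rewrite -rmorphM mulrV ?rmorph1.
by lmod_ring: hmuV.
Qed.

Lemma second_order_eq_sym l m (p q r : F) w :
  X l (X m w) + p *: X l w + q *: X m w + r *: w = 0 ->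
  X m (X l w) + q *: X m w + p *: X l w + r *: w = 0.
Proof. by move=> hw; apply: etrans hw; rewrite hXcomm; lmod_ring. Qed.

Lemma second_order_relC l m w : second_order_rel l m w -> second_order_rel m l w.
Proof. by case=> p [q [r /second_order_eq_sym hw]]; exists q, p, r. Qed.

Lemma second_order_rel_of_factor l m w T (b h p q r : F) :
  h \is a GRing.unit -> X l w + b *: w = h *: T ->
  X m T = p *: w + q *: X m w + r *: T -> second_order_rel l m w.
Proof.
move=> hh hfac hXT.
have TE : T = h^-1 *: (X l w + b *: w) by rewrite hfac scalerA mulVr ?scale1r.
have XXw : X m (X l w) = X m (h *: T) - X m (b *: w) by rewrite -hfac XD addrK.
exists (- (D m h + h * r) / h), (b - h * q), (D m b - h * p - (D m h + h * r) / h * b).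
by rewrite hXcomm XXw !XZ hXT TE; lmod_ring.
Qed.

Lemma satisfies_system_of_rels w (i j k : 'I_3) : i != j -> i != k -> j != k ->
  second_order_rel i j w -> second_order_rel i k w -> second_order_rel j k w ->
  exists Ah Ch, symmetric_coefs Ah Ch /\ satisfies_system X Ah Ch w.
Proof.
move=> hij hik hjk [aij [aji [cij Eij]]] [aik [aki [cik Eik]]] [ajk [akj [cjk Ejk]]].
exists (fun p l m => if p == i then (if (l == k) || (m == k) then aik else aij)
  else if p == j then (if (l == k) || (m == k) then ajk else aji)
  else (if (l == i) || (m == i) then aki else akj)).
exists (fun l m => if (l == k) || (m == k) then (if (l == i) || (m == i) then cik else cjk)
  else cij).
split; first by split=> [p|] l m; rewrite (orbC (l == k)) (orbC (l == i)).
have [hji hki hkj] : [/\ j != i, k != i & k != j] by rewrite !(eq_sym k) eq_sym.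
have ne := (eqxx, negbTE hij, negbTE hik, negbTE hjk, negbTE hji, negbTE hki, negbTE hkj).
move=> l m; case/or3P: (ord3_cover hij hik hjk l) => /eqP ->;
  case/or3P: (ord3_cover hij hik hjk m) => /eqP ->; rewrite ?eqxx //= => _; rewrite ?ne /=.
- exact: Eij.
- exact: Eik.
- exact: second_order_eq_sym.
- exact: Ejk.
- exact: second_order_eq_sym.
- exact: second_order_eq_sym.
Qed.

Section LaplaceTransform.
Variables (A : 'I_3 -> 'I_3 -> 'I_3 -> F) (C : 'I_3 -> 'I_3 -> F) (T : M).
Hypothesis hsys : satisfies_system X A C T.
Hypothesis hfree : jet1_free T.

Lemma system_XX l m : l != m ->
  X l (X m T) = - (A l l m *: X l T + A m l m *: X m T + C l m *: T).
Proof. by move=> hlm; apply/eqP; rewrite -addr_eq0 !addrA; apply/eqP/hsys. Qed.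

Lemma system_coefA_sym l m : l != m -> A l l m = A l m l.
Proof.
move=> hlm; have hml : m != l by rewrite eq_sym.
have [k /andP [hkl hkm]] := ord3_third hlm.
have E : X l (X m T) - X m (X l T) = 0 by rewrite hXcomm subrr.
rewrite (system_XX hlm) (system_XX hml) in E.
apply/esym/eqP; rewrite -subr_eq0; apply/eqP.
apply: (jet1_free_coefX (k := k) (c0 := C m l - C l m) (cj := A m m l - A m l m) (ck := 0)
  hfree hlm); rewrite 1?eq_sym //.
by apply: etrans E; lmod_ring.
Qed.

Lemma system_integrability (i j k : 'I_3) : i != j -> i != k -> j != k ->
  D k (A i i j) = A i i j * A i i k - A j j k * A i i j - A k j k * A i i k + C j k.
Proof.
move=> hij hik hjk.
have V : X k (X i (X j T)) - X i (X j (X k T)) = 0.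
  by rewrite (hXcomm k i) (hXcomm k j) subrr.
rewrite (system_XX hij) (system_XX hjk) !(XN, XD, XZ) (hXcomm k i T) (hXcomm k j T) in V.
rewrite (system_XX hik) (system_XX hij) (system_XX hjk) in V.
apply/eqP; rewrite -subr_eq0; apply/eqP.
apply: (jet1_free_coefX hfree hij hik hjk
  (c0 := - (A i i j * C i k + A j i j * C j k - D k (C i j) - A j j k * C i j
            - A k j k * C i k + D i (C j k)))
  (cj := D k (A j i j) - D i (A j j k))
  (ck := - (A i i j * A k i k + A j i j * A k j k - C i j + D i (A k j k)
            - A k j k * A k i k))).
by rewrite -oppr0 -V; lmod_ring.
Qed.

Lemma laplace_transform_Xi (i j : 'I_3) : i != j ->
  X i (laplace_transform X A i j T) + A j i j *: laplace_transform X A i j T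
  = Hinv D A C i j *: T.
Proof. by move=> hij; rewrite /laplace_transform /Hinv !(XD, XZ) (system_XX hij); lmod_ring. Qed.

Lemma laplace_transform_Xk (i j k : 'I_3) : i != j -> i != k -> j != k ->
  X k (laplace_transform X A i j T) + A j j k *: laplace_transform X A i j T
  = - Hinv3 A i j k *: laplace_transform X A i k T.
Proof.
move=> hij hik hjk; have hkj : k != j by rewrite eq_sym.
rewrite /laplace_transform /Hinv3 !(XD, XZ) (hXcomm k j T) (system_XX hjk).
by rewrite (system_integrability hij hik hjk) (system_coefA_sym hkj); lmod_ring.
Qed.

Lemma laplace_transform_system (i j k : 'I_3) : i != j -> i != k -> j != k ->
  Hinv D A C i j \is a GRing.unit -> Hinv3 A i j k \is a GRing.unit ->
  exists Ah Ch, symmetric_coefs Ah Ch /\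
    satisfies_system X Ah Ch (laplace_transform X A i j T).
Proof.
move=> hij hik hjk hH hH3.
have hkj : k != j by rewrite eq_sym.
have xi_i := laplace_transform_Xi hij.
have xi_k := laplace_transform_Xk hij hik hjk.
have eta_j := laplace_transform_Xk hik hij hkj.
set xi := laplace_transform X A i j T in xi_i xi_k eta_j *.
set eta := laplace_transform X A i k T in xi_k eta_j.
have hH3N : - Hinv3 A i j k \is a GRing.unit by rewrite unitrN.
have etaE : eta = (- Hinv3 A i j k)^-1 *: (X k xi + A j j k *: xi).
  by rewrite xi_k scalerA mulVr ?scale1r.
apply: (satisfies_system_of_rels hij hik hjk).
- apply: (second_order_rel_of_factor (p := 1) (q := 0) (r := - A i i j) hH xi_i).
  by rewrite /xi /laplace_transform; lmod_ring.
- apply: (second_order_rel_of_factor (p := (- Hinv3 A i j k)^-1 * A j j k)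
    (q := (- Hinv3 A i j k)^-1) (r := - A i i k) hH xi_i).
  have -> : X k T = eta - A i i k *: T by rewrite /eta /laplace_transform addrK.
  by rewrite etaE; lmod_ring.
- apply: second_order_relC.
  apply: (second_order_rel_of_factor (p := - Hinv3 A i k j) (q := 0) (r := - A k k j)
    hH3N xi_k).
  by rewrite -eta_j; lmod_ring.
Qed.

End LaplaceTransform.

End TotalDerivatives.

Theorem proposition3p6
  (F : comUnitRingType) (M : lmodType F)
  (D : 'I_3 -> F -> F) (X : 'I_3 -> M -> M)
  (hD : forall i, is_derivation (D i))
  (hDcomm : forall i j f, D i (D j f) = D j (D i f))
  (hX : forall i, is_form_derivation (D i) (X i))
  (hXcomm : forall i j w, X i (X j w) = X j (X i w))
  (a : 'I_3 -> 'I_3 -> 'I_3 -> F) (c : 'I_3 -> 'I_3 -> F) (theta : M)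
  (hsym : symmetric_coefs a c)
  (htheta : satisfies_system X a c theta)
  (hindep : forall (c0 : F) (cs : 'I_3 -> F),
      c0 *: theta + \sum_(l < 3) cs l *: X l theta = 0 ->
      c0 = 0 /\ forall l, cs l = 0)
  (mu : F) (hmu : mu \is a GRing.unit)
  (i j : 'I_3) (hij : i != j)
  (hH : Hinv D (Acoef D a mu) (Ccoef D a c mu) i j \is a GRing.unit)
  (hH3 : forall k : 'I_3, k != i -> k != j ->
      Hinv3 (Acoef D a mu) i j k \is a GRing.unit) :
  exists (Ah : 'I_3 -> 'I_3 -> 'I_3 -> F) (Ch : 'I_3 -> 'I_3 -> F),
    symmetric_coefs Ah Ch /\
    satisfies_system X Ah Ch (laplace_transform X (Acoef D a mu) i j (mu *: theta)).
Proof.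
have [k /andP [hki hkj]] := ord3_third hij.
have hsys := satisfies_system_scale hX hmu htheta.
have hfree := jet1_free_scale hX hmu (hindep : jet1_free X theta).
by apply: (laplace_transform_system hX hXcomm hsys hfree hij _ _ hH (hH3 k hki hkj));
  rewrite eq_sym.
Qed.
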